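(* Let $n\ge 2$ be even and let $m \ge \frac{5n}{2}-1$. Then the permutation $(1,n)(2n-1,2n)\in S_m$ is a product of $n$-crossing permutations over $S_m$.
   Context: For integers $2\le n\le m$ and $1 \le j \le m-n+1$, the $n$-crossing permutation $\pi_j\in S_m$ is $\pi_j=(j,\,j+n-1)(j+1,\,j+n-2)\cdots$, i.e. the involution sending $i \mapsto 2j+n-1-i$ for $j\le i\le j+n-1$ and fixing all other elements of $\{1,\dots,m\}$. The $n$-crossing permutations over $S_m$ are $\pi_1,\dots,\pi_{m-n+1}$. *)

From mathcomp Require Import all_boot all_order all_fingroup.
Set Implicit Arguments. Unset Strict Implicit. Unset Printing Implicit Defensive.

(* Convention: S_m is {perm 'I_m}; the point k of {1,...,m} is the ordinal
   with value k-1 (0-indexed). *)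

(* 0-indexed version of pi_{j+1}: for j <= i <= j+n-1, i |-> 2j+n-1-i;
   all other points fixed. *)
Definition crossing_fun (n j i : nat) : nat :=
  if (j <= i) && (i < j + n) then (2 * j + n - 1 - i)%N else i.

(* s is an n-crossing permutation over S_m: s = pi_{j+1} with
   1 <= j+1 <= m-n+1, i.e. j + n <= m. *)
Definition is_crossing (n m : nat) (s : {perm 'I_m}) : Prop :=
  exists j : nat, (j + n <= m)%N /\ forall i : 'I_m, val (s i) = crossing_fun n j i.

(* 0-indexed version of (1,n)(2n-1,2n). *)
Definition target_fun (n i : nat) : nat :=
  if i == 0 then (n - 1)%N
  else if i == (n - 1)%N then 0
  else if i == (2 * n - 2)%N then (2 * n - 1)%N
  else if i == (2 * n - 1)%N then (2 * n - 2)%N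
  else i.

From mathcomp Require Import all_boot all_order all_fingroup.
From mathcomp Require Import zify.

(* Write n = 2q.  Composing the crossings whose windows start (1-indexed) at
   1, 2q, 1, 3q, 2q gives the permutation
     u = (1, 4q, 2q, 4q-1) (2q+1, 4q+1) (2q+2, 4q+2) ... (3q-1, 5q-1),
   a 4-cycle times q-1 disjoint transpositions.  Squaring kills the
   transpositions and splits the 4-cycle into (1, 2q)(4q-1, 4q), so the word
   repeated twice is the target.  Its rightmost window ends at 5q-1 <= m.
   Below, q = p + 1 and points are 0-indexed. *)

(* The mirror image is given by an equation rather than by a truncated
   subtraction, which keeps the case analyses below cheap for lia. *)
Variant crossing_spec (n j i : nat) : nat -> Set :=
  | CrossingIn k of (j <= i < j + n)%N & (k + i + 1 = 2 * j + n)%N :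
      crossing_spec n j i k
  | CrossingOut of ~~ (j <= i < j + n)%N : crossing_spec n j i i.

Lemma crossingP n j i : crossing_spec n j i (crossing_fun n j i).
Proof.
rewrite /crossing_fun; case: ifP => [i_in|/negbT i_out]; last exact: CrossingOut.
by apply: CrossingIn => //; lia.
Qed.

Ltac case_innermost_crossing :=
  match goal with
  | |- context [crossing_fun ?n ?j ?i] =>
      lazymatch i with
      | context [crossing_fun _ _ _] => fail
      | _ => case: (crossingP n j i) => [? ? ?|?]
      end
  end.

Lemma crossing_funK n j : involutive (crossing_fun n j).
Proof. by move=> i; do 2 case_innermost_crossing; lia. Qed.

Section CrossingPerm.
Variables n m j : nat.

(* Points whose mirror image leaves 'I_m stay fixed, which keeps the map an
   involution even when the window does not fit. *)
Definition crossing_ord (i : 'I_m) : 'I_m := insubd i (crossing_fun n j i).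

Lemma crossing_ordK : involutive crossing_ord.
Proof.
move=> i; apply: val_inj; rewrite /crossing_ord !val_insubd /=.
case: (boolP (crossing_fun n j i < m)) => [_|ge_m]; last by rewrite (negbTE ge_m).
by rewrite crossing_funK ltn_ord.
Qed.

Definition crossing_perm : {perm 'I_m} := perm (inv_inj crossing_ordK).

Hypothesis window_fits : (j + n <= m)%N.

Lemma crossing_permE (i : 'I_m) : val (crossing_perm i) = crossing_fun n j i.
Proof.
rewrite permE val_insubd /=; case: crossingP => [k i_in k_eq|_]; last by rewrite ltn_ord.
by have -> : (k < m)%N by lia.
Qed.

Lemma crossing_perm_is_crossing : is_crossing n crossing_perm.
Proof. by exists j; split=> // i; apply: crossing_permE. Qed.

End CrossingPerm.

Lemma prod_crossing_permE n m (js : seq nat) (i : 'I_m) :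
  all (fun j => j + n <= m)%N js ->
  val ((\prod_(j <- js) crossing_perm n m j)%g i) =
  foldl (fun x j => crossing_fun n j x) i js.
Proof.
elim: js i => [|j js IHjs] i /=; first by rewrite big_nil perm1.
by case/andP=> fit_j fit_js; rewrite big_cons permM IHjs // crossing_permE.
Qed.

Definition root_windows (p : nat) : seq nat :=
  [:: 0; 2 * p + 1; 0; 3 * p + 2; 2 * p + 1]%N.

Definition target_root (p x : nat) : nat :=
  if x == 0 then 4 * p + 3
  else if x == 4 * p + 3 then 2 * p + 1
  else if x == 2 * p + 1 then 4 * p + 2
  else if x == 4 * p + 2 then 0
  else if (2 * p + 2 <= x < 3 * p + 2)%N then x + (2 * p + 2)
  else if (4 * p + 4 <= x < 5 * p + 4)%N then x - (2 * p + 2)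
  else x.

Lemma foldl_root_windows p x :
  foldl (fun y j => crossing_fun (2 * p.+1) j y) x (root_windows p) = target_root p x.
Proof.
rewrite /= /target_root.
by repeat case: ifP => ?; do 5 case_innermost_crossing; lia.
Qed.

Lemma target_root_sqr p x : target_root p (target_root p x) = target_fun (2 * p.+1) x.
Proof.
rewrite {2}/target_root.
by repeat case: ifP => ?; rewrite /target_root /target_fun /=; repeat case: ifP => ?; lia.
Qed.

Theorem lemma2p7 (n m : nat) (t : {perm 'I_m}) :
  (2 <= n)%N -> ~~ odd n -> (5 * n <= 2 * m + 2)%N ->
  (forall i : 'I_m, val (t i) = target_fun n i) ->
  exists ss : seq {perm 'I_m},
    (forall s, s \in ss -> is_crossing n s) /\ (\prod_(s <- ss) s)%g = t.
Proof.
move=> n_ge2 n_even n_le tE.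
have n_eq : n = (2 * n./2)%N.
  by rewrite mul2n -{1}(odd_double_half n) (negbTE n_even).
have : (0 < n./2)%N by lia.
case: n./2 n_eq => // p n_eq _; subst n.
have windows_fit : all (fun j => j + 2 * p.+1 <= m)%N (root_windows p).
  by rewrite /= andbT; apply/and5P; split; lia.
exists (map (crossing_perm (2 * p.+1) m) (root_windows p ++ root_windows p)); split.
  move=> _ /mapP[j j_in ->]; apply: crossing_perm_is_crossing.
  by move: j_in; rewrite mem_cat orbb => /(allP windows_fit).
apply/permP => i; apply: val_inj.
rewrite big_map prod_crossing_permE ?all_cat ?windows_fit //.
by rewrite foldl_cat !foldl_root_windows target_root_sqr tE.
Qed.
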